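(* Let $\sigma$ be an $(\alpha,\beta)$-ReLU activation applied entrywise. For every $h\in\mathbb R^n$, $\mathrm{Dir}(\sigma(h))+\mathrm{Dir}(\sigma(-h))\le(\alpha^2+\beta^2)\,\mathrm{Dir}(h)$.
   Context: An activation $\sigma:\mathbb R\to\mathbb R$ is $(\alpha,\beta)$-ReLU if $\sigma(x)=\alpha x$ for $x\ge0$ and $\sigma(x)=\beta x$ for $x<0$, where $\alpha,\beta\ge0$ are not both $0$. Let $\mathcal G=(\mathcal V,\mathcal E)$ be a finite undirected graph with $n$ nodes, adjacency matrix $A$, degree matrix $D=\mathrm{diag}(A\mathbf 1_n)$ with degrees $d_i$, $\tilde A=A+I$, $\tilde D=D+I$, $\hat A=\tilde D^{-1/2}\tilde A\tilde D^{-1/2}$, $\hat L=I-\hat A$. For $x\in\mathbb R^n$, $\mathrm{Dir}(x)=x^\top\hat Lx=\sum_{\{i,j\}\in\mathcal E}(x_i/\sqrt{1+d_i}-x_j/\sqrt{1+d_j})^2$. *)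

From HB Require Import structures.
From mathcomp Require Import all_boot all_order all_algebra.
Set Implicit Arguments. Unset Strict Implicit. Unset Printing Implicit Defensive.
Import Order.TTheory GRing.Theory Num.Theory.
Local Open Scope ring_scope.

Definition simple_graph (n : nat) (e : rel 'I_n) : Prop :=
  (forall i j, e i j = e j i) /\ (forall i, ~~ e i i).

Section Defs.
Variable R : rcfType.
Variable n : nat.
Variable e : rel 'I_n.

Definition adjA : 'M[R]_n := \matrix_(i, j) (e i j)%:R.
Definition deg (i : 'I_n) : R := \sum_j adjA i j.
Definition adjAt : 'M[R]_n := adjA + 1%:M.
Definition degDt : 'M[R]_n := \matrix_(i, j) ((i == j)%:R * (deg i + 1)).
Definition degDt_isqrt : 'M[R]_n :=
  \matrix_(i, j) ((i == j)%:R * (Num.sqrt (deg i + 1))^-1).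
Definition adjAhat : 'M[R]_n := degDt_isqrt *m adjAt *m degDt_isqrt.
Definition Lhat : 'M[R]_n := 1%:M - adjAhat.
Definition Dir (x : 'cV[R]_n) : R := (x^T *m Lhat *m x) ord0 ord0.
End Defs.

Definition abReLU (R : realDomainType) (alpha beta : R) (x : R) : R :=
  if 0 <= x then alpha * x else beta * x.

(* Put [y i := x i / sqrt (1 + d i)].  By symmetry of the edge relation,
   [2 Dir x] is the sum over ordered adjacent pairs [(i, j)] of
   [(y i - y j)^2].  The ReLU is positively homogeneous, so it commutes with
   the rescaling [x |-> y], and the theorem reduces edge by edge to the scalar
   inequality [(s u - s v)^2 + (s (-u) - s (-v))^2 <= (a^2 + b^2) (u - v)^2],
   an equality when [u] and [v] have the same sign. *)
From mathcomp Require Import all_boot all_order all_algebra.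
From mathcomp Require Import ring.
Import Order.TTheory GRing.Theory Num.Theory.
Local Open Scope ring_scope.

Lemma abReLU_pmul (R : realDomainType) (a b s u : R) :
  0 < s -> abReLU a b (s * u) = s * abReLU a b u.
Proof. by move=> s_gt0; rewrite /abReLU pmulr_rge0 //; case: ifP; rewrite mulrCA. Qed.

Lemma abReLU_parts (R : realDomainType) (a b x : R) :
  abReLU a b x = a * Num.max x 0 - b * Num.max (- x) 0.
Proof.
rewrite /abReLU; case: lerP => [x_ge0 | /ltW x_le0].
  by rewrite max_r ?oppr_le0 // mulr0 subr0.
by rewrite max_l ?oppr_ge0 // mulr0 sub0r mulrN opprK.
Qed.

Lemma max_pos_mul_max_neg (R : realDomainType) (x : R) : Num.max x 0 * Num.max (- x) 0 = 0.
Proof.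
case: (lerP 0 x) => [x_ge0 | _]; last by rewrite mul0r.
by rewrite max_r ?oppr_le0 ?mulr0.
Qed.

Lemma max_pos_sub_max_neg (R : realDomainType) (x : R) : Num.max x 0 - Num.max (- x) 0 = x.
Proof.
case: (lerP 0 x) => [x_ge0 | /ltW x_le0]; first by rewrite max_r ?oppr_le0 ?subr0.
by rewrite max_l ?oppr_ge0 ?sub0r ?opprK.
Qed.

(* With [u = p - q] and [v = p' - q'] split into positive and negative parts,
   the slack is [2 (a - b)^2 (p q' + p' q)], the terms [p q] and [p' q']
   being zero. *)
Lemma abReLU_sqr_diff_le (R : realDomainType) (a b u v : R) :
  (abReLU a b u - abReLU a b v) ^+ 2 + (abReLU a b (- u) - abReLU a b (- v)) ^+ 2
  <= (a ^+ 2 + b ^+ 2) * (u - v) ^+ 2.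
Proof.
rewrite !abReLU_parts !opprK.
rewrite -[in X in _ <= _ * X](max_pos_sub_max_neg _ u).
rewrite -[in X in _ <= _ * X](max_pos_sub_max_neg _ v).
move: (max_pos_mul_max_neg _ u) (max_pos_mul_max_neg _ v).
have max0_ge0 (x : R) : 0 <= Num.max x 0 by rewrite le_max lexx orbT.
have := max0_ge0 u; have := max0_ge0 (- u); have := max0_ge0 v; have := max0_ge0 (- v).
move: (Num.max u 0) (Num.max (- u) 0) (Num.max v 0) (Num.max (- v) 0) => p q p' q' q'_ge0 p'_ge0 q_ge0 p_ge0 pq0 pq'0.
rewrite -subr_ge0; set slack := (X in 0 <= X).
have -> : slack = 2 * (a - b) ^+ 2 * (p * q' + p' * q - p * q - p' * q').
  by rewrite /slack; ring.
rewrite pq0 pq'0 !subr0; apply: mulr_ge0; first by rewrite mulr_ge0 ?sqr_ge0.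
by rewrite addr_ge0 ?mulr_ge0.
Qed.

Section NormalizedLaplacian.
Variables (R : rcfType) (n : nat) (e : rel 'I_n).

Definition deg_isqrt (i : 'I_n) : R := (Num.sqrt (deg R e i + 1))^-1.

Lemma degE i : deg R e i = \sum_j (e i j)%:R.
Proof. by apply: eq_bigr => j _; rewrite mxE. Qed.

Lemma deg_ge0 i : 0 <= deg R e i.
Proof. by rewrite degE; apply: sumr_ge0 => j _; rewrite ler0n. Qed.

Lemma deg_isqrt_gt0 i : 0 < deg_isqrt i.
Proof. by rewrite invr_gt0 sqrtr_gt0 ltr_wpDl ?deg_ge0. Qed.

Lemma sqr_deg_isqrt_deg i : deg_isqrt i ^+ 2 * deg R e i = 1 - deg_isqrt i ^+ 2.
Proof.
have d1_neq0 : deg R e i + 1 != 0 by rewrite gt_eqF // ltr_wpDl ?deg_ge0.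
by rewrite /deg_isqrt exprVn sqr_sqrtr ?addr_ge0 ?deg_ge0 //; field.
Qed.

Lemma LhatE i j :
  Lhat R e i j = (i == j)%:R - deg_isqrt i * deg_isqrt j * ((e i j)%:R + (i == j)%:R).
Proof.
rewrite /Lhat /adjAhat !mxE (bigD1 j) //= big1 => [|k kj]; last first.
  by rewrite [X in _ * X]mxE (negbTE kj) mul0r mulr0.
rewrite addr0 [X in X * _]mxE (bigD1 i) //= big1 => [|k ki]; last first.
  by rewrite [X in X * _]mxE eq_sym (negbTE ki) !mul0r.
by rewrite addr0 !mxE !eqxx /deg_isqrt /=; ring.
Qed.

Lemma Dir_quad (x : 'cV[R]_n) : Dir e x = \sum_i \sum_j x i 0 * Lhat R e i j * x j 0.
Proof.
rewrite /Dir mxE exchange_big; apply: eq_bigr => i _ /=.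
by rewrite mxE big_distrl; apply: eq_bigr => k _; rewrite mxE.
Qed.

Lemma Dir_sum (x : 'cV[R]_n) :
  Dir e x = \sum_i x i 0 ^+ 2 * (1 - deg_isqrt i ^+ 2)
    - \sum_i \sum_j (e i j)%:R * (deg_isqrt i * x i 0 * (deg_isqrt j * x j 0)).
Proof.
rewrite Dir_quad -sumrB; apply: eq_bigr => i _.
rewrite (bigD1 i) // [X in _ - X](bigD1 i) //= LhatE eqxx.
rewrite opprD addrA -sumrN; congr (_ + _); first by rewrite mulr1n; ring.
by apply: eq_bigr => j ji; rewrite LhatE eq_sym (negbTE ji) mulr0n; ring.
Qed.

Lemma Dir_edge_sum (x : 'cV[R]_n) : (forall i j, e i j = e j i) ->
  Dir e x *+ 2 =
    \sum_i \sum_j (e i j)%:R * (deg_isqrt i * x i 0 - deg_isqrt j * x j 0) ^+ 2.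
Proof.
move=> e_sym; set y := fun i => deg_isqrt i * x i 0.
have row_sum i : \sum_j (e i j)%:R * y i ^+ 2 = x i 0 ^+ 2 * (1 - deg_isqrt i ^+ 2).
  by rewrite -big_distrl /= -degE /y -sqr_deg_isqrt_deg; ring.
have col_sum : \sum_i \sum_j (e i j)%:R * y j ^+ 2 = \sum_i \sum_j (e i j)%:R * y i ^+ 2.
  by rewrite exchange_big; apply: eq_bigr => i _; apply: eq_bigr => j _; rewrite e_sym.
transitivity (\sum_i \sum_j (e i j)%:R * y i ^+ 2 + \sum_i \sum_j (e i j)%:R * y j ^+ 2
    - (\sum_i \sum_j (e i j)%:R * (y i * y j)) *+ 2); last first.
  rewrite -sumrMnl -big_split -sumrB; apply: eq_bigr => i _ /=.
  by rewrite -sumrMnl -big_split -sumrB; apply: eq_bigr => j _; rewrite /= /y; ring.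
rewrite col_sum Dir_sum (eq_bigr _ (fun i _ => esym (row_sum i))) /y.
ring.
Qed.
End NormalizedLaplacian.

Theorem mainTheorem12 (R : rcfType) (n : nat) (e : rel 'I_n)
  (Hg : simple_graph e) (alpha beta : R)
  (Ha : 0 <= alpha) (Hb : 0 <= beta) (Hab : (alpha != 0) || (beta != 0))
  (h : 'cV[R]_n) :
  Dir e (map_mx (abReLU alpha beta) h) + Dir e (map_mx (abReLU alpha beta) (- h))
  <= (alpha ^+ 2 + beta ^+ 2) * Dir e h.
Proof.
have [e_sym _] := Hg.
rewrite -(ler_pMn2r (n := 2)) // mulrnDl -mulrnAr !Dir_edge_sum //.
rewrite -big_split mulr_sumr; apply: ler_sum => i _.
rewrite -big_split mulr_sumr; apply: ler_sum => j _ /=.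
rewrite !mxE; case: (e i j); last by rewrite !mul0r addr0 mulr0.
rewrite !mul1r -!abReLU_pmul ?deg_isqrt_gt0 // !mulrN.
exact: abReLU_sqr_diff_le.
Qed.
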